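(* Let $\varphi$ be an arithmetic formula (set parameters allowed). Then \[ \mathrm{ACA}_0\vdash{\tt wo}(\Lambda)\to\forall\lambda\in|\Lambda|\,\big(\widehat{\tt TR}^\Lambda_\lambda(\varphi,X)\leftrightarrow{\tt TR}^\Lambda_\lambda(\varphi,X)\big). \]
   Context: Second-order arithmetic with $0,1,+,\times$, exponentiation, $<,=,\in$; $\mathrm{ACA}_0=\mathrm Q+{\tt Ind}+$arithmetic comprehension. A set $\Lambda$ codes $(|\Lambda|,<_\Lambda)$; ${\tt wo}(\Lambda)$ states it is a linear order on $|\Lambda|$ with every nonempty subset having a least element. $\langle\cdot,\cdot\rangle$ is pairing with projections $(x)_0,(x)_1$; $Y_\xi=\{x:\langle\xi,x\rangle\in Y\}$. For a formula $\varphi(x,Y)$ with recursion variable $Y$, $\varphi(x,Y_{<\lambda})$ replaces each atom $t\in Y$ by $(t)_0<_\Lambda\lambda\wedge t\in Y$. ${\tt TR}^\Lambda_\lambda(\varphi,Y)$ is $\forall\xi\le_\Lambda\lambda\,\forall x(x\in Y_\xi\leftrightarrow\varphi(x,Y_{<\xi}))$. $\widehat{\tt TR}^\Lambda_\lambda(\varphi,X)$ is $\forall x\big((x)_0\le_\Lambda\lambda\to[x\in X\leftrightarrow\forall Y({\tt TR}^\Lambda_{(x)_0}(\varphi,Y)\to\varphi((x)_1,Y_{<(x)_0}))]\big)$. *)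

(* Semantic rendering of "ACA_0 |- ...":
   truth in every (Henkin, i.e. general two-sorted) model of ACA_0, for all
   values of the free variables. *)

Inductive term : Type :=
  | tvar  : nat -> term           (* number variable (de Bruijn index) *)
  | tzero : term
  | tone  : term
  | tadd  : term -> term -> term
  | tmul  : term -> term -> term
  | texp  : term -> term -> term.

Inductive form : Type :=
  | fEq  : term -> term -> form
  | fLt  : term -> term -> form
  | fMem : term -> nat -> form
  | fNeg : form -> form
  | fAnd : form -> form -> form
  | fOr  : form -> form -> form
  | fImp : form -> form -> form
  | fAll : form -> form           (* binds number variable 0 *)
  | fEx  : form -> form.

Definition scons {A : Type} (a : A) (e : nat -> A) : nat -> A :=
  fun n => match n with 0 => a | S k => e k end.

Record structure : Type := {
  N : Type;
  St : Type;
  zero : N;  one : N;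
  add : N -> N -> N;  mul : N -> N -> N;  exp : N -> N -> N;
  lt : N -> N -> Prop;
  mem : N -> St -> Prop
}.

Section Eval.
Variable M : structure.

Fixpoint teval (e : nat -> N M) (t : term) : N M :=
  match t with
  | tvar n => e n
  | tzero => zero M
  | tone => one M
  | tadd a b => add M (teval e a) (teval e b)
  | tmul a b => mul M (teval e a) (teval e b)
  | texp a b => exp M (teval e a) (teval e b)
  end.

(* Satisfaction; set variables are interpreted by predicates on numbers
   (an environment value (fun n => mem n Z) for Z : St is an actual set). *)
Fixpoint feval (e : nat -> N M) (s : nat -> (N M -> Prop)) (f : form) : Prop :=
  match f with
  | fEq a b => teval e a = teval e b
  | fLt a b => lt M (teval e a) (teval e b)
  | fMem a n => s n (teval e a)
  | fNeg g => ~ feval e s g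
  | fAnd g h => feval e s g /\ feval e s h
  | fOr g h => feval e s g \/ feval e s h
  | fImp g h => feval e s g -> feval e s h
  | fAll g => forall x : N M, feval (scons x e) s g
  | fEx g => exists x : N M, feval (scons x e) s g
  end.

Definition setenv (ps : nat -> St M) : nat -> (N M -> Prop) :=
  fun i n => mem M n (ps i).
End Eval.

Definition is_ACA0 (M : structure) : Prop :=
  let N0 := zero M in let N1 := one M in
  let ad := add M in let mu := mul M in let ex := exp M in
  (forall x, ad x N1 <> N0) /\
  (forall x y, ad x N1 = ad y N1 -> x = y) /\
  (forall x, x = N0 \/ exists y, x = ad y N1) /\
  (forall x, ad x N0 = x) /\
  (forall x y, ad x (ad y N1) = ad (ad x y) N1) /\
  (forall x, mu x N0 = N0) /\
  (forall x y, mu x (ad y N1) = ad (mu x y) x) /\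
  (forall x, ex x N0 = N1) /\
  (forall x y, ex x (ad y N1) = mu (ex x y) x) /\
  (forall x y, lt M x y <-> exists z, ad x (ad z N1) = y) /\
  (forall X : St M, mem M N0 X ->
     (forall n, mem M n X -> mem M (ad n N1) X) -> forall n, mem M n X) /\
  (forall (f : form) (e : nat -> N M) (ps : nat -> St M),
     exists Z : St M, forall n,
       mem M n Z <-> feval M (scons n e) (setenv M ps) f).

Section Notions.
Variable M : structure.

(* Cantor pairing:  c = <a,b>  iff  2c = (a+b)(a+b+1) + 2a.
   (x)_0 = a, (x)_1 = b  iff  pairR a b x. *)
Definition pairR (a b c : N M) : Prop :=
  add M c c = add M (mul M (add M a b) (add M (add M a b) (one M))) (add M a a).

(* Lambda codes |Lambda| = Lambda_0 and x <_Lambda y iff <x,y> in Lambda_1. *)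
Definition inField (L : St M) (x : N M) : Prop :=
  exists c, pairR (zero M) x c /\ mem M c L.

Definition ltL (L : St M) (x y : N M) : Prop :=
  exists p c, pairR x y p /\ pairR (one M) p c /\ mem M c L.

Definition leL (L : St M) (x y : N M) : Prop := ltL L x y \/ x = y.

Definition wo (L : St M) : Prop :=
  (forall x y, ltL L x y -> inField L x /\ inField L y) /\
  (forall x, inField L x -> ~ ltL L x x) /\
  (forall x y z, ltL L x y -> ltL L y z -> ltL L x z) /\
  (forall x y, inField L x -> inField L y -> ltL L x y \/ x = y \/ ltL L y x) /\
  (forall Z : St M, (exists x, inField L x /\ mem M x Z) ->
     exists x, inField L x /\ mem M x Z /\
       forall y, inField L y -> mem M y Z -> leL L x y).

Definition slice (Y : St M) (xi x : N M) : Prop :=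
  exists c, pairR xi x c /\ mem M c Y.

(* interpretation of the atom  t \in Y  in  phi(x, Y_{<lam}) :
   (t)_0 <_Lambda lam /\ t \in Y *)
Definition restr (L : St M) (lam : N M) (Y : St M) : N M -> Prop :=
  fun t => (exists a b, pairR a b t /\ ltL L a lam) /\ mem M t Y.

(* phi(x, P): number variable 0 is x, set variable 0 is Y (here P),
   set variables 1,2,... are the set parameters ps, number variables
   1,2,... are the number parameters e. *)
Definition phiE (phi : form) (e : nat -> N M) (ps : nat -> St M)
  (x : N M) (P : N M -> Prop) : Prop :=
  feval M (scons x e) (scons P (setenv M ps)) phi.

Definition TR (phi : form) (e : nat -> N M) (ps : nat -> St M)
  (L : St M) (lam : N M) (Y : St M) : Prop :=
  forall xi, leL L xi lam ->
    forall x, slice Y xi x <-> phiE phi e ps x (restr L xi Y).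

Definition hatTR (phi : form) (e : nat -> N M) (ps : nat -> St M)
  (L : St M) (lam : N M) (X : St M) : Prop :=
  forall x a b, pairR a b x -> leL L a lam ->
    (mem M x X <->
       forall Y : St M, TR phi e ps L a Y -> phiE phi e ps b (restr L a Y)).
End Notions.

From Stdlib Require Import Ring Classical Lia PeanoNat.

(* TR -> hatTR: any two hierarchies along Lambda agree wherever both are defined
   (induction along Lambda), so the universal quantifier in hatTR is witnessed by X
   itself.  hatTR -> TR: by induction along Lambda, if the stages of X below xi obey
   the recursion, then arithmetic comprehension glues them with
   {x | phi(x, X_{<xi})} at stage xi into a hierarchy Y up to xi that agrees with X
   below xi; by uniqueness hatTR then says X_xi = {x | phi(x, Y_{<xi})} =
   {x | phi(x, X_{<xi})}.  Induction along Lambda is available in ACA_0 because all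
   properties involved are arithmetic: phi(x, Y_{<xi}) is itself an arithmetic
   formula in x, xi, Y and Lambda. *)

Section Formulas.
Variable M : structure.

Lemma teval_ext e1 e2 t : (forall i, e1 i = e2 i) -> teval M e1 t = teval M e2 t.
Proof. intro H; induction t; simpl; congruence. Qed.

Lemma feval_ext f : forall e1 e2 s1 s2,
  (forall i, e1 i = e2 i) -> (forall i n, s1 i n <-> s2 i n) ->
  (feval M e1 s1 f <-> feval M e2 s2 f).
Proof.
  assert (Hcons : forall e1 e2 (x : N M), (forall i, e1 i = e2 i) ->
            forall i, scons x e1 i = scons x e2 i) by (intros ? ? ? ? [|i]; simpl; auto).
  induction f; intros e1 e2 s1 s2 He Hs; simpl;
    repeat rewrite (teval_ext e1 e2) by exact He.
  - tauto.
  - tauto.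
  - apply Hs.
  - rewrite (IHf e1 e2 s1 s2) by auto; tauto.
  - rewrite (IHf1 e1 e2 s1 s2), (IHf2 e1 e2 s1 s2) by auto; tauto.
  - rewrite (IHf1 e1 e2 s1 s2), (IHf2 e1 e2 s1 s2) by auto; tauto.
  - rewrite (IHf1 e1 e2 s1 s2), (IHf2 e1 e2 s1 s2) by auto; tauto.
  - split; intros H x; specialize (H x);
      rewrite (IHf (scons x e1) (scons x e2) s1 s2) in *; auto.
  - split; intros [x H]; exists x;
      rewrite (IHf (scons x e1) (scons x e2) s1 s2) in *; auto.
Qed.

Fixpoint trename (g : nat -> nat) (t : term) : term :=
  match t with
  | tvar n => tvar (g n)
  | tzero => tzero
  | tone => tone
  | tadd a b => tadd (trename g a) (trename g b)
  | tmul a b => tmul (trename g a) (trename g b)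
  | texp a b => texp (trename g a) (trename g b)
  end.

Lemma teval_trename g e t : teval M e (trename g t) = teval M (fun i => e (g i)) t.
Proof. induction t; simpl; congruence. Qed.

Definition tshift : term -> term := trename S.

Lemma teval_tshift x e t : teval M (scons x e) (tshift t) = teval M e t.
Proof. unfold tshift. rewrite teval_trename. apply teval_ext. reflexivity. Qed.

Definition fiff (A B : form) : form := fAnd (fImp A B) (fImp B A).

Definition fpair (a b c : term) : form :=
  fEq (tadd c c) (tadd (tmul (tadd a b) (tadd (tadd a b) tone)) (tadd a a)).

Definition fltL (i : nat) (a b : term) : form :=
  fEx (fEx (fAnd (fpair (tshift (tshift a)) (tshift (tshift b)) (tvar 1))
                 (fAnd (fpair tone (tvar 1) (tvar 0)) (fMem (tvar 0) i)))).

Definition fslice (i : nat) (xi x : term) : form :=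
  fEx (fAnd (fpair (tshift xi) (tshift x) (tvar 0)) (fMem (tvar 0) i)).

Definition frestr (iX iL : nat) (t lam : term) : form :=
  fAnd (fEx (fEx (fAnd (fpair (tvar 1) (tvar 0) (tshift (tshift t)))
                       (fltL iL (tvar 1) (tshift (tshift lam))))))
       (fMem t iX).

Lemma feval_fiff e s A B : feval M e s (fiff A B) <-> (feval M e s A <-> feval M e s B).
Proof. simpl. tauto. Qed.

Lemma feval_fpair e s a b c :
  feval M e s (fpair a b c) <-> pairR M (teval M e a) (teval M e b) (teval M e c).
Proof. reflexivity. Qed.

Lemma feval_fltL e ps i a b :
  feval M e (setenv M ps) (fltL i a b) <-> ltL M (ps i) (teval M e a) (teval M e b).
Proof.
  unfold fltL, ltL. simpl. unfold setenv.
  split; intros [p [c H]]; exists p, c; rewrite !teval_tshift in *; exact H.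
Qed.

Lemma feval_fslice e ps i xi x :
  feval M e (setenv M ps) (fslice i xi x) <-> slice M (ps i) (teval M e xi) (teval M e x).
Proof.
  unfold fslice, slice. simpl. unfold setenv.
  split; intros [c H]; exists c; rewrite !teval_tshift in *; exact H.
Qed.

Lemma feval_frestr e ps iX iL t lam :
  feval M e (setenv M ps) (frestr iX iL t lam) <->
  restr M (ps iL) (teval M e lam) (ps iX) (teval M e t).
Proof.
  unfold frestr, restr. cbn [feval].
  split; intros [[a [b [Hp Hl]]] Ht]; (split; [exists a, b | exact Ht]);
    rewrite feval_fpair, feval_fltL in *; rewrite !teval_tshift in *; exact (conj Hp Hl).
Qed.

(* [fbelow d f] is [f] with the atoms [t \in Y] relativised to [Y_{<xi}], where
   [xi] is a new number variable inserted at de Bruijn index [d+1] ([d] counts the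
   binders passed, plus the variable [x]); [Y] and [Lambda] become set variables
   0 and 1, and the set parameters move up by one. *)
Definition skip (d i : nat) : nat := if i <=? d then i else S i.

Definition insert_at (d : nat) (v : N M) (env : nat -> N M) : nat -> N M :=
  fun i => if i <=? d then env i else if i =? S d then v else env (pred i).

Fixpoint fbelow (d : nat) (f : form) : form :=
  match f with
  | fEq a b => fEq (trename (skip d) a) (trename (skip d) b)
  | fLt a b => fLt (trename (skip d) a) (trename (skip d) b)
  | fMem t 0 => frestr 0 1 (trename (skip d) t) (tvar (S d))
  | fMem t (S j) => fMem (trename (skip d) t) (S (S j))
  | fNeg g => fNeg (fbelow d g)
  | fAnd g h => fAnd (fbelow d g) (fbelow d h)
  | fOr g h => fOr (fbelow d g) (fbelow d h)
  | fImp g h => fImp (fbelow d g) (fbelow d h)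
  | fAll g => fAll (fbelow (S d) g)
  | fEx g => fEx (fbelow (S d) g)
  end.

Lemma teval_skip d v env t : teval M (insert_at d v env) (trename (skip d) t) = teval M env t.
Proof.
  rewrite teval_trename. apply teval_ext. intro i. unfold insert_at, skip.
  destruct (i <=? d) eqn:E; [rewrite E; reflexivity|].
  apply Nat.leb_gt in E.
  replace (S i <=? d) with false by (symmetry; apply Nat.leb_gt; lia).
  replace (S i =? S d) with false by (symmetry; apply Nat.eqb_neq; lia).
  reflexivity.
Qed.

Lemma scons_insert_at d v env x i :
  scons x (insert_at d v env) i = insert_at (S d) v (scons x env) i.
Proof.
  destruct i as [|j]; [reflexivity|]. unfold insert_at. simpl.
  destruct (j <=? d) eqn:E; [reflexivity|].
  destruct (j =? S d); [reflexivity|].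
  destruct j; [discriminate E|reflexivity].
Qed.

Lemma feval_scons_insert_at d v env x s f :
  feval M (scons x (insert_at d v env)) s f <-> feval M (insert_at (S d) v (scons x env)) s f.
Proof. apply feval_ext; [apply scons_insert_at | tauto]. Qed.

Lemma feval_fbelow f : forall d env ps X L v,
  feval M (insert_at d v env) (setenv M (scons X (scons L ps))) (fbelow d f) <->
  feval M env (scons (restr M L v X) (setenv M ps)) f.
Proof.
  induction f; intros d env ps X L v; cbn [fbelow feval];
    repeat rewrite teval_skip.
  - tauto.
  - tauto.
  - destruct n as [|j]; cbn [fbelow feval].
    + rewrite feval_frestr, teval_skip. cbn [teval].
      unfold insert_at at 1. rewrite (proj2 (Nat.leb_gt (S d) d)), Nat.eqb_refl by lia.
      reflexivity.
    + rewrite teval_skip. reflexivity.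
  - rewrite IHf. tauto.
  - rewrite IHf1, IHf2. tauto.
  - rewrite IHf1, IHf2. tauto.
  - rewrite IHf1, IHf2. tauto.
  - setoid_rewrite feval_scons_insert_at. setoid_rewrite IHf. reflexivity.
  - setoid_rewrite feval_scons_insert_at. setoid_rewrite IHf. reflexivity.
Qed.

Lemma feval_fbelow0 phi e ps X L xi x :
  feval M (scons x (scons xi e)) (setenv M (scons X (scons L ps))) (fbelow 0 phi) <->
  phiE M phi e ps x (restr M L xi X).
Proof.
  rewrite (feval_ext _ _ (insert_at 0 xi (scons x e)) _ (setenv M (scons X (scons L ps)))).
  - apply feval_fbelow.
  - intros [|[|i]]; reflexivity.
  - tauto.
Qed.

Lemma phiE_ext phi e ps x (P P' : N M -> Prop) : (forall t, P t <-> P' t) ->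
  (phiE M phi e ps x P <-> phiE M phi e ps x P').
Proof. intro H. apply feval_ext; [reflexivity|]. intros [|i] n; simpl; [apply H | tauto]. Qed.
End Formulas.

Section ACA0.
Variable M : structure.
Hypothesis HM : is_ACA0 M.

Local Infix "⊕" := (add M) (at level 50, left associativity).
Local Infix "⊗" := (mul M) (at level 40, left associativity).
Local Notation a0 := (zero M).
Local Notation a1 := (one M).

Lemma succ_neq_zero x : x ⊕ a1 <> a0.
Proof. destruct HM as (h & _). apply h. Qed.
Lemma succ_inj x y : x ⊕ a1 = y ⊕ a1 -> x = y.
Proof. destruct HM as (_ & h & _). apply h. Qed.
Lemma zero_or_succ x : x = a0 \/ exists y, x = y ⊕ a1.
Proof. destruct HM as (_ & _ & h & _). apply h. Qed.
Lemma add_0_r x : x ⊕ a0 = x.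
Proof. destruct HM as (_ & _ & _ & h & _). apply h. Qed.
Lemma add_succ_r x y : x ⊕ (y ⊕ a1) = (x ⊕ y) ⊕ a1.
Proof. destruct HM as (_ & _ & _ & _ & h & _). apply h. Qed.
Lemma mul_0_r x : x ⊗ a0 = a0.
Proof. destruct HM as (_ & _ & _ & _ & _ & h & _). apply h. Qed.
Lemma mul_succ_r x y : x ⊗ (y ⊕ a1) = x ⊗ y ⊕ x.
Proof. destruct HM as (_ & _ & _ & _ & _ & _ & h & _). apply h. Qed.

Definition definable (P : N M -> Prop) : Prop :=
  exists f e ps, forall n, feval M (scons n e) (setenv M ps) f <-> P n.

Lemma comprehension P : definable P -> exists Z : St M, forall n, mem M n Z <-> P n.
Proof.
  intros (f & e & ps & HP). destruct HM as (_ & _ & _ & _ & _ & _ & _ & _ & _ & _ & _ & h).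
  destruct (h f e ps) as [Z HZ]. exists Z. intro n. rewrite HZ. apply HP.
Qed.

Lemma definable_neg P : definable P -> definable (fun n => ~ P n).
Proof. intros (f & e & ps & HP). exists (fNeg f), e, ps. intro n. simpl. rewrite HP. tauto. Qed.

Lemma induction P : definable P -> P a0 -> (forall n, P n -> P (n ⊕ a1)) -> forall n, P n.
Proof.
  intros DP H0 HS. destruct (comprehension _ DP) as [Z HZ].
  destruct HM as (_ & _ & _ & _ & _ & _ & _ & _ & _ & _ & ind & _).
  intro n. apply HZ, ind; [apply HZ, H0|]. intros m Hm. apply HZ, HS, HZ, Hm.
Qed.

Section Arithmetic.
(* If [St M] is empty, the induction and comprehension axioms hold vacuously. *)
Hypothesis St_inhabited : inhabited (St M).

Lemma definable_setfree f e P :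
  (forall n s, feval M (scons n e) s f <-> P n) -> definable P.
Proof. intro H. destruct St_inhabited as [S]. exists f, e, (fun _ => S). intro n. apply H. Qed.

Let e0 : nat -> N M := fun _ => a0.

Lemma add_0_l x : a0 ⊕ x = x.
Proof.
  revert x. apply induction.
  - apply (definable_setfree (fEq (tadd tzero (tvar 0)) (tvar 0)) e0). reflexivity.
  - apply add_0_r.
  - intros n H. rewrite add_succ_r, H. reflexivity.
Qed.

Lemma add_assoc x y z : x ⊕ (y ⊕ z) = (x ⊕ y) ⊕ z.
Proof.
  revert z. apply induction.
  - apply (definable_setfree (fEq (tadd (tvar 1) (tadd (tvar 2) (tvar 0)))
                                  (tadd (tadd (tvar 1) (tvar 2)) (tvar 0))) (scons x (scons y e0))).
    reflexivity.
  - rewrite !add_0_r. reflexivity.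
  - intros n H. rewrite !add_succ_r, H. reflexivity.
Qed.

Lemma add_succ_l y x : (y ⊕ a1) ⊕ x = (y ⊕ x) ⊕ a1.
Proof.
  revert x. apply induction.
  - apply (definable_setfree (fEq (tadd (tadd (tvar 1) tone) (tvar 0))
                                  (tadd (tadd (tvar 1) (tvar 0)) tone)) (scons y e0)).
    reflexivity.
  - rewrite !add_0_r. reflexivity.
  - intros n H. rewrite !add_succ_r, H. reflexivity.
Qed.

Lemma add_comm x y : x ⊕ y = y ⊕ x.
Proof.
  revert y. apply induction.
  - apply (definable_setfree (fEq (tadd (tvar 1) (tvar 0)) (tadd (tvar 0) (tvar 1))) (scons x e0)).
    reflexivity.
  - rewrite add_0_r, add_0_l. reflexivity.
  - intros n H. rewrite add_succ_r, H, add_succ_l. reflexivity.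
Qed.

Lemma mul_0_l x : a0 ⊗ x = a0.
Proof.
  revert x. apply induction.
  - apply (definable_setfree (fEq (tmul tzero (tvar 0)) tzero) e0). reflexivity.
  - apply mul_0_r.
  - intros n H. rewrite mul_succ_r, H, add_0_r. reflexivity.
Qed.

Lemma mul_add_distr_l x y z : x ⊗ (y ⊕ z) = x ⊗ y ⊕ x ⊗ z.
Proof.
  revert z. apply induction.
  - apply (definable_setfree (fEq (tmul (tvar 1) (tadd (tvar 2) (tvar 0)))
                                  (tadd (tmul (tvar 1) (tvar 2)) (tmul (tvar 1) (tvar 0))))
                             (scons x (scons y e0))).
    reflexivity.
  - rewrite add_0_r, mul_0_r, add_0_r. reflexivity.
  - intros n H. rewrite add_succ_r, !mul_succ_r, H, add_assoc. reflexivity.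
Qed.

Lemma mul_assoc x y z : x ⊗ (y ⊗ z) = (x ⊗ y) ⊗ z.
Proof.
  revert z. apply induction.
  - apply (definable_setfree (fEq (tmul (tvar 1) (tmul (tvar 2) (tvar 0)))
                                  (tmul (tmul (tvar 1) (tvar 2)) (tvar 0))) (scons x (scons y e0))).
    reflexivity.
  - rewrite !mul_0_r. reflexivity.
  - intros n H. rewrite !mul_succ_r, mul_add_distr_l, H. reflexivity.
Qed.

Lemma mul_succ_l y x : (y ⊕ a1) ⊗ x = y ⊗ x ⊕ x.
Proof.
  revert x. apply induction.
  - apply (definable_setfree (fEq (tmul (tadd (tvar 1) tone) (tvar 0))
                                  (tadd (tmul (tvar 1) (tvar 0)) (tvar 0))) (scons y e0)).
    reflexivity.
  - rewrite !mul_0_r, add_0_r. reflexivity.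
  - intros n H. rewrite !mul_succ_r, H, !add_succ_r.
    f_equal. rewrite <- !add_assoc. f_equal. apply add_comm.
Qed.

Lemma mul_comm x y : x ⊗ y = y ⊗ x.
Proof.
  revert y. apply induction.
  - apply (definable_setfree (fEq (tmul (tvar 1) (tvar 0)) (tmul (tvar 0) (tvar 1))) (scons x e0)).
    reflexivity.
  - rewrite mul_0_r, mul_0_l. reflexivity.
  - intros n H. rewrite mul_succ_r, H, mul_succ_l. reflexivity.
Qed.

Lemma semiring : semi_ring_theory a0 a1 (add M) (mul M) (@eq (N M)).
Proof.
  constructor.
  - exact add_0_l.
  - exact add_comm.
  - exact add_assoc.
  - intro x. rewrite <- (add_0_l a1), mul_succ_l, mul_0_l, add_0_l. reflexivity.
  - exact mul_0_l.
  - exact mul_comm.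
  - exact mul_assoc.
  - intros x y z. rewrite (mul_comm (x ⊕ y)), mul_add_distr_l, !(mul_comm z). reflexivity.
Qed.

Add Ring ACA0_semiring : semiring.

Lemma add_cancel_r z x y : x ⊕ z = y ⊕ z -> x = y.
Proof.
  revert z x y. apply (induction (fun z => forall x y, x ⊕ z = y ⊕ z -> x = y)).
  - apply (definable_setfree (fAll (fAll (fImp (fEq (tadd (tvar 1) (tvar 2)) (tadd (tvar 0) (tvar 2)))
                                               (fEq (tvar 1) (tvar 0))))) e0).
    reflexivity.
  - intros x y. rewrite !add_0_r. auto.
  - intros n H x y Hxy. apply H, succ_inj. rewrite <- !add_succ_r. exact Hxy.
Qed.

Lemma add_succ_neq u v : u ⊕ (v ⊕ a1) <> u.
Proof.
  intro H. apply (succ_neq_zero v), (add_cancel_r u). rewrite add_0_l, add_comm. exact H.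
Qed.

Lemma trichotomy y x :
  (exists k, x ⊕ (k ⊕ a1) = y) \/ x = y \/ (exists k, y ⊕ (k ⊕ a1) = x).
Proof.
  revert y. apply induction.
  - apply (definable_setfree
      (fOr (fEx (fEq (tadd (tvar 2) (tadd (tvar 0) tone)) (tvar 1)))
           (fOr (fEq (tvar 1) (tvar 0)) (fEx (fEq (tadd (tvar 1) (tadd (tvar 0) tone)) (tvar 2)))))
      (scons x e0)).
    reflexivity.
  - destruct (zero_or_succ x) as [->|[w ->]]; [tauto|]. right; right. exists w. ring.
  - intros n [[k Hk]|[H|[k Hk]]].
    + left. exists (k ⊕ a1). rewrite <- Hk. ring.
    + left. exists a0. rewrite <- H. ring.
    + destruct (zero_or_succ k) as [->|[j ->]].
      * right; left. rewrite <- Hk. ring.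
      * right; right. exists j. rewrite <- Hk. ring.
Qed.

Lemma double_inj x y : x ⊕ x = y ⊕ y -> x = y.
Proof.
  intro H. destruct (trichotomy y x) as [[k <-]|[E|[k <-]]]; auto; exfalso.
  - apply (add_succ_neq (x ⊕ x) (k ⊕ k ⊕ a1)). rewrite H at 2. ring.
  - apply (add_succ_neq (y ⊕ y) (k ⊕ k ⊕ a1)). rewrite <- H at 2. ring.
Qed.

Lemma pronic_even s : exists h, h ⊕ h = s ⊗ (s ⊕ a1).
Proof.
  revert s. apply induction.
  - apply (definable_setfree (fEx (fEq (tadd (tvar 0) (tvar 0)) (tmul (tvar 1) (tadd (tvar 1) tone))))
                             e0).
    reflexivity.
  - exists a0. ring.
  - intros s [h H]. exists (h ⊕ (s ⊕ a1)).
    transitivity ((h ⊕ h) ⊕ (s ⊕ a1) ⊕ (s ⊕ a1)); [ring|]. rewrite H. ring.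
Qed.

Lemma pair_exists a b : exists c, pairR M a b c.
Proof.
  destruct (pronic_even (a ⊕ b)) as [h H]. exists (h ⊕ a). unfold pairR.
  rewrite <- H. ring.
Qed.

Lemma pair_functional a b c c' : pairR M a b c -> pairR M a b c' -> c = c'.
Proof. unfold pairR. intros H1 H2. apply double_inj. congruence. Qed.

(* Codes with coordinate sum [s] lie in [s(s+1)/2, s(s+1)/2 + s], so a larger sum
   gives a strictly larger code. *)
Lemma pair_sum_not_lt a b a' b' c : pairR M a b c -> pairR M a' b' c ->
  ~ exists k, (a ⊕ b) ⊕ (k ⊕ a1) = a' ⊕ b'.
Proof.
  unfold pairR. intros H1 H2 [k Hk]. rewrite <- Hk in H2.
  apply (add_succ_neq (c ⊕ c)
    ((k ⊕ k) ⊗ a ⊕ ((k ⊕ a1) ⊕ (k ⊕ a1)) ⊗ b ⊕ k ⊗ k ⊕ (k ⊕ k ⊕ k) ⊕ a1 ⊕ (a' ⊕ a'))).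
  rewrite H1 at 1. rewrite H2. ring.
Qed.

Lemma pair_injective a b a' b' c : pairR M a b c -> pairR M a' b' c -> a = a' /\ b = b'.
Proof.
  intros H1 H2.
  assert (Hs : a ⊕ b = a' ⊕ b').
  { destruct (trichotomy (a' ⊕ b') (a ⊕ b)) as [Hl|[E|Hr]]; auto; exfalso.
    - exact (pair_sum_not_lt _ _ _ _ _ H1 H2 Hl).
    - exact (pair_sum_not_lt _ _ _ _ _ H2 H1 Hr). }
  unfold pairR in *. rewrite <- Hs, H1, !(add_comm _ (_ ⊕ _)) in H2.
  apply add_cancel_r, double_inj in H2. subst a'. split; auto.
  apply (add_cancel_r a). rewrite !(add_comm _ a). exact Hs.
Qed.
End Arithmetic.

Section WellOrder.
Variable L : St M.
Hypothesis Hwo : wo M L.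

Lemma ltL_field_l x y : ltL M L x y -> inField M L x.
Proof. destruct Hwo as (h & _). intro H. apply (h _ _ H). Qed.

Lemma ltL_irrefl x : ~ ltL M L x x.
Proof. destruct Hwo as (h1 & h2 & _). intro H. exact (h2 x (proj1 (h1 _ _ H)) H). Qed.

Lemma ltL_trans x y z : ltL M L x y -> ltL M L y z -> ltL M L x z.
Proof. destruct Hwo as (_ & _ & h & _). apply h. Qed.

Lemma leL_trans x y z : leL M L x y -> leL M L y z -> leL M L x z.
Proof. unfold leL. intros [H1| ->] [H2| ->]; auto. left; eapply ltL_trans; eauto. Qed.

Lemma ltL_leL_trans x y z : ltL M L x y -> leL M L y z -> ltL M L x z.
Proof. intros H1 [H2| ->]; [eapply ltL_trans|]; eauto. Qed.

Lemma leL_field x y : inField M L y -> leL M L x y -> inField M L x.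
Proof. intros H [H1| ->]; [eapply ltL_field_l|]; eauto. Qed.

Lemma wo_induction lam P : definable P ->
  (forall xi, inField M L xi -> leL M L xi lam -> (forall eta, ltL M L eta xi -> P eta) -> P xi) ->
  forall xi, inField M L xi -> leL M L xi lam -> P xi.
Proof.
  intros DP Hstep xi Hf Hle. apply NNPP; intro nP.
  destruct (comprehension _ (definable_neg _ DP)) as [Z HZ].
  destruct Hwo as (_ & _ & _ & _ & least).
  destruct (least Z) as [x0 (Hx0 & HZx0 & Hmin)]; [exists xi; split; [|apply HZ]; auto|].
  apply HZ in HZx0. apply HZx0, Hstep; auto.
  - apply (leL_trans _ xi); auto. apply Hmin; [|apply HZ]; auto.
  - intros eta Heta. apply NNPP; intro nPe.
    apply (ltL_irrefl eta), (ltL_leL_trans _ x0); auto.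
    apply Hmin; [eapply ltL_field_l|apply HZ]; eauto.
Qed.

Lemma slice_iff_mem Y a b c : pairR M a b c -> (slice M Y a b <-> mem M c Y).
Proof.
  intro Hc. split; [|exists c; auto].
  intros [c' [Hc' Hm]]. rewrite (pair_functional (inhabits L) _ _ _ _ Hc Hc'). exact Hm.
Qed.

Lemma restr_ext xi Y Y' :
  (forall eta, ltL M L eta xi -> forall x, slice M Y eta x <-> slice M Y' eta x) ->
  forall t, restr M L xi Y t <-> restr M L xi Y' t.
Proof.
  intros H t. unfold restr.
  enough (K : forall a b, pairR M a b t -> ltL M L a xi -> (mem M t Y <-> mem M t Y')).
  { split; intros [[a [b [Hp Hl]]] Ht];
      (split; [exists a, b; auto | apply (K a b); auto]). }
  intros a b Hp Hl. rewrite <- !(slice_iff_mem _ a b t Hp). apply H, Hl.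
Qed.

Lemma slices_agree_definable Y Y' :
  definable (fun xi => forall x, slice M Y xi x <-> slice M Y' xi x).
Proof.
  exists (fAll (fiff (fslice 0 (tvar 1) (tvar 0)) (fslice 1 (tvar 1) (tvar 0)))),
         (fun _ => zero M), (scons Y (fun _ => Y')).
  intro xi. cbn [feval]. setoid_rewrite feval_fiff. setoid_rewrite feval_fslice. reflexivity.
Qed.

Section Recursion.
Variables (phi : form) (e : nat -> N M) (ps : nat -> St M).

Lemma TR_le lam a Y : TR M phi e ps L lam Y -> leL M L a lam -> TR M phi e ps L a Y.
Proof. intros H Ha xi Hxi. apply H. eapply leL_trans; eauto. Qed.

Lemma TR_unique_slice a Y Y' : inField M L a ->
  TR M phi e ps L a Y -> TR M phi e ps L a Y' ->
  forall xi, leL M L xi a -> forall x, slice M Y xi x <-> slice M Y' xi x.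
Proof.
  intros Ha HY HY' xi Hxi.
  apply (wo_induction a (fun z => forall x, slice M Y z x <-> slice M Y' z x));
    eauto using leL_field, slices_agree_definable.
  intros z _ Hza IH x. rewrite (HY z Hza), (HY' z Hza).
  apply phiE_ext, restr_ext. exact IH.
Qed.

Lemma TR_unique_restr a Y Y' : inField M L a ->
  TR M phi e ps L a Y -> TR M phi e ps L a Y' ->
  forall t, restr M L a Y t <-> restr M L a Y' t.
Proof.
  intros Ha HY HY'. apply restr_ext. intros eta Heta.
  apply (TR_unique_slice a); auto. left; exact Heta.
Qed.

Lemma phiE_restr_definable xi X : definable (fun y => phiE M phi e ps y (restr M L xi X)).
Proof.
  exists (fbelow 0 phi), (scons xi e), (scons X (scons L ps)). intro y. apply feval_fbelow0.
Qed.

Lemma stage_correct_definable X :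
  definable (fun xi => forall x, slice M X xi x <-> phiE M phi e ps x (restr M L xi X)).
Proof.
  exists (fAll (fiff (fslice 0 (tvar 1) (tvar 0)) (fbelow 0 phi))), e, (scons X (scons L ps)).
  intro xi. cbn [feval]. setoid_rewrite feval_fiff. setoid_rewrite feval_fslice.
  setoid_rewrite feval_fbelow0. reflexivity.
Qed.

Section Glue.
Variables (xi : N M) (X W Y : St M).
Hypothesis X_stages : forall eta, ltL M L eta xi ->
  forall x, slice M X eta x <-> phiE M phi e ps x (restr M L eta X).
Hypothesis W_def : forall y, mem M y W <-> phiE M phi e ps y (restr M L xi X).
Hypothesis Y_def : forall t,
  mem M t Y <-> restr M L xi X t \/ exists y, pairR M xi y t /\ mem M y W.

Lemma glue_below t a b : pairR M a b t -> ltL M L a xi -> (mem M t Y <-> mem M t X).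
Proof.
  intros Hp Ha. rewrite Y_def. split.
  - intros [[_ Ht] | [y [Hy _]]]; auto.
    destruct (pair_injective (inhabits L) _ _ _ _ _ Hp Hy) as [-> _].
    exfalso; eapply ltL_irrefl; eauto.
  - intro Ht. left. split; auto. exists a, b; auto.
Qed.

Lemma glue_restr eta : leL M L eta xi -> forall t, restr M L eta Y t <-> restr M L eta X t.
Proof.
  intros Heta t. unfold restr.
  split; intros [[a [b [Hp Ha]]] Ht]; (split; [exists a, b; auto|]);
    [rewrite <- (glue_below t a b) | rewrite (glue_below t a b)]; eauto using ltL_leL_trans.
Qed.

Lemma glue_slice_top x : slice M Y xi x <-> mem M x W.
Proof.
  destruct (pair_exists (inhabits L) xi x) as [c Hc].
  rewrite (slice_iff_mem _ _ _ _ Hc), Y_def. split.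
  - intros [[[a [b [Hp Ha]]] _] | [y [Hy HyW]]].
    + destruct (pair_injective (inhabits L) _ _ _ _ _ Hp Hc) as [-> _].
      exfalso; eapply ltL_irrefl; eauto.
    + destruct (pair_injective (inhabits L) _ _ _ _ _ Hy Hc) as [_ ->]. exact HyW.
  - intro Hx. right. exists x; auto.
Qed.

Lemma glue_TR : TR M phi e ps L xi Y.
Proof.
  intros eta [Hlt | ->] x.
  - destruct (pair_exists (inhabits L) eta x) as [c Hc].
    rewrite (slice_iff_mem _ _ _ _ Hc), (glue_below c eta x), <- (slice_iff_mem _ _ _ _ Hc),
      X_stages by auto.
    apply phiE_ext. intro t. symmetry. apply glue_restr. left; exact Hlt.
  - rewrite glue_slice_top, W_def.
    apply phiE_ext. intro t. symmetry. apply glue_restr. right; reflexivity.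
Qed.
End Glue.

Lemma TR_extend xi X :
  (forall eta, ltL M L eta xi ->
     forall x, slice M X eta x <-> phiE M phi e ps x (restr M L eta X)) ->
  exists Y, TR M phi e ps L xi Y /\ forall t, restr M L xi Y t <-> restr M L xi X t.
Proof.
  intro X_stages.
  destruct (comprehension _ (phiE_restr_definable xi X)) as [W HW].
  destruct (comprehension (fun t => restr M L xi X t \/ exists y, pairR M xi y t /\ mem M y W))
    as [Y HY].
  { exists (fOr (frestr 0 1 (tvar 0) (tvar 1))
                (fEx (fAnd (fpair (tvar 2) (tvar 0) (tvar 1)) (fMem (tvar 0) 2)))),
           (scons xi e), (scons X (scons L (fun _ => W))).
    intro t. cbn [feval]. rewrite feval_frestr. reflexivity. }
  exists Y. split.
  - apply (glue_TR xi X W); auto.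
  - apply (glue_restr xi X W); auto. right; reflexivity.
Qed.

Lemma hatTR_TR lam X : inField M L lam ->
  hatTR M phi e ps L lam X -> TR M phi e ps L lam X.
Proof.
  intros Hlam H.
  enough (stages : forall xi, inField M L xi -> leL M L xi lam ->
            forall x, slice M X xi x <-> phiE M phi e ps x (restr M L xi X))
    by (intros xi Hxi; apply stages; eauto using leL_field).
  apply (wo_induction lam _ (stage_correct_definable X)).
  intros xi Hf Hle IH.
  destruct (TR_extend xi X IH) as [Y [HY HYX]].
  intro x. destruct (pair_exists (inhabits L) xi x) as [c Hc].
  rewrite (slice_iff_mem _ _ _ _ Hc), (H c xi x Hc Hle). split.
  - intro Hall. apply (phiE_ext M _ _ _ _ _ _ HYX), Hall, HY.
  - intros HX Y' HY'. apply (phiE_ext M _ _ _ _ (restr M L xi X)); auto.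
    intro t. rewrite <- HYX. apply (TR_unique_restr xi); auto.
Qed.

Lemma TR_hatTR lam X : inField M L lam ->
  TR M phi e ps L lam X -> hatTR M phi e ps L lam X.
Proof.
  intros Hlam HT x a b Hp Hle.
  assert (Ha : inField M L a) by (eapply leL_field; eauto).
  assert (HTa : TR M phi e ps L a X) by (eapply TR_le; eauto).
  rewrite <- (slice_iff_mem _ _ _ _ Hp), (HTa a (or_intror eq_refl)). split.
  - intros HX Y HY. apply (phiE_ext M _ _ _ _ (restr M L a X)); auto.
    apply (TR_unique_restr a); auto.
  - intro Hall. apply Hall, HTa.
Qed.
End Recursion.
End WellOrder.
End ACA0.

Theorem mainTheorem14 (phi : form) :
  forall (M : structure), is_ACA0 M ->
  forall (e : nat -> N M) (ps : nat -> St M) (L X : St M),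
    wo M L ->
    forall lam : N M, inField M L lam ->
      (hatTR M phi e ps L lam X <-> TR M phi e ps L lam X).
Proof.
  intros M HM e ps L X Hwo lam Hlam. split.
  - apply hatTR_TR; assumption.
  - apply TR_hatTR; assumption.
Qed.
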